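(* The equation $x+y=z$ with $x,y,z\in\mathcal{B}_2$ has exactly one solution, namely $$x=y=\frac{\sqrt3-1}{2}=[\overline{2,1}],\qquad z=\sqrt3-1=[\overline{1,2}].$$
   Context: For irrational $x\in(0,1)$, $x=[a_1(x),a_2(x),\dots]$ denotes its simple continued fraction expansion; an overline denotes a periodically repeated block. $\mathcal{B}_2$ is the set of irrational $x\in(0,1)$ with $a_k(x)\le 2$ for all $k\ge1$. *)

From Stdlib Require Import Reals Lra Lia ZArith.
Open Scope R_scope.

Definition floorR (x : R) : Z := (up x - 1)%Z.

(* The Gauss map x |-> 1/x - floor(1/x), which shifts continued fraction
   expansions: if x = [a1,a2,...] then gauss x = [a2,a3,...]. *)
Definition gauss (x : R) : R := / x - IZR (floorR (/ x)).

(* k-th partial quotient a_k(x) (k >= 1) of the simple continued fraction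
   expansion of x in (0,1):  a_k(x) = floor(1 / T^{k-1} x). *)
Definition cf_digit (k : nat) (x : R) : Z :=
  floorR (/ (Nat.iter (k - 1) gauss x)).

Definition irrational (x : R) : Prop :=
  forall p q : Z, q <> 0%Z -> x <> IZR p / IZR q.

Definition B2 (x : R) : Prop :=
  0 < x < 1 /\ irrational x /\ forall k : nat, (1 <= k)%nat -> (cf_digit k x <= 2)%Z.

(* Every x in B_2 lies in [[alpha, beta]], where alpha = [2,1,2,1,...] = (sqrt 3 - 1)/2 and
   beta = [1,2,1,2,...] = sqrt 3 - 1 are swapped by the Gauss map: if x lay at distance
   d > 0 outside this interval, digits <= 2 would force its Gauss image outside at distance
   at least d / beta, and iterating would push the orbit out of (0,1).  Since beta = 2 alpha,
   x + y = z with x, y, z in [[alpha, beta]] forces x = y = alpha and z = beta. *)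
From Stdlib Require Import Reals Lra Lia ZArith.
Open Scope R_scope.

Lemma floorR_spec (u : R) : IZR (floorR u) <= u < IZR (floorR u) + 1.
Proof.
  unfold floorR; destruct (archimed u); rewrite minus_IZR; lra.
Qed.

Lemma floorR_unique (u : R) (k : Z) : IZR k <= u < IZR k + 1 -> floorR u = k.
Proof.
  intros [Hk1 Hk2]; destruct (floorR_spec u) as [Hf1 Hf2].
  assert ((floorR u < k + 1)%Z) by (apply lt_IZR; rewrite plus_IZR; lra).
  assert ((k < floorR u + 1)%Z) by (apply lt_IZR; rewrite plus_IZR; lra).
  lia.
Qed.

Lemma iter_gauss_S (n : nat) (x : R) :
  Nat.iter (S n) gauss x = gauss (Nat.iter n gauss x).
Proof. reflexivity. Qed.

Lemma cf_digit_S (n : nat) (x : R) :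
  cf_digit (S n) x = floorR (/ Nat.iter n gauss x).
Proof. unfold cf_digit; now rewrite Nat.sub_succ, Nat.sub_0_r. Qed.

Lemma irrational_of_affine (m n : Z) (x : R) :
  irrational (IZR m * x + IZR n) -> irrational x.
Proof.
  intros Hirr p q Hq Ex; apply (Hirr (m * p + n * q)%Z q Hq).
  rewrite Ex, plus_IZR, !mult_IZR; field; now apply not_0_IZR.
Qed.

Lemma irrational_neq0 (x : R) : irrational x -> x <> 0.
Proof.
  intros Hirr E; apply (Hirr 0%Z 1%Z); [discriminate|]; rewrite E; simpl; field.
Qed.

Lemma irrational_inv (x : R) : irrational x -> irrational (/ x).
Proof.
  intros Hirr p q Hq Ex.
  assert (Hx := irrational_neq0 x Hirr).
  assert (Hp : IZR p <> 0).
  { intro Hp; rewrite Hp in Ex; unfold Rdiv in Ex; rewrite Rmult_0_l in Ex.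
    now apply (Rinv_neq_0_compat x Hx). }
  apply (Hirr q p); [intro; subst; apply Hp; reflexivity|].
  rewrite <- (Rinv_inv x), Ex; field; split; [exact Hp | now apply not_0_IZR].
Qed.

Lemma no_square_eq_3_square (n : nat) (p q : Z) :
  (q * q < Z.of_nat n)%Z -> q <> 0%Z -> (p * p <> 3 * (q * q))%Z.
Proof.
  revert p q; induction n as [|n IH]; intros p q Hn Hq E; [simpl in Hn; nia|].
  (* 3 divides p, and p = 3 m gives q * q = 3 * (m * m) with a smaller solution *)
  assert (Hp : p = (3 * (p / 3) + p mod 3)%Z) by (apply Z.div_mod; lia).
  assert (Hr : (0 <= p mod 3 < 3)%Z) by (apply Z.mod_pos_bound; lia).
  set (m := (p / 3)%Z) in Hp; set (r := (p mod 3)%Z) in Hp, Hr.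
  clearbody m r; subst p.
  assert (r = 0%Z) as ->.
  { assert (r = 0 \/ r = 1 \/ r = 2)%Z as [|[|]] by lia; subst; nia. }
  apply (IH q m); [rewrite Nat2Z.inj_succ in Hn; nia | intro; subst; nia | nia].
Qed.

Lemma irrational_sqrt3 : irrational (sqrt 3).
Proof.
  intros p q Hq E.
  assert (Hq' : IZR q <> 0) by now apply not_0_IZR.
  assert (Hsq : IZR (p * p) = IZR (3 * (q * q))).
  { rewrite !mult_IZR, <- (sqrt_sqrt 3) by lra.
    replace (IZR p) with (sqrt 3 * IZR q) by (rewrite E; field; exact Hq'); ring. }
  apply (no_square_eq_3_square (S (Z.to_nat (q * q))) p q); [|exact Hq|now apply eq_IZR].
  rewrite Nat2Z.inj_succ, Z2Nat.id by nia; lia.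
Qed.

Lemma gauss_irrational (t : R) : irrational t -> irrational (gauss t).
Proof.
  intro Hirr; apply (irrational_of_affine 1 (floorR (/ t))).
  unfold gauss; replace (1 * (/ t - _) + _) with (/ t) by (simpl; ring).
  now apply irrational_inv.
Qed.

Lemma gauss_in_unit (t : R) : 0 < t < 1 -> irrational t -> 0 < gauss t < 1.
Proof.
  intros Ht Hirr; unfold gauss; destruct (floorR_spec (/ t)) as [Hf1 Hf2].
  assert (Hne : / t <> IZR (floorR (/ t))).
  { intro E; apply (irrational_inv t Hirr (floorR (/ t)) 1%Z); [discriminate|].
    simpl; unfold Rdiv; rewrite Rinv_1, Rmult_1_r; exact E. }
  lra.
Qed.

Lemma iter_gauss_in_unit (x : R) (n : nat) : 0 < x < 1 -> irrational x ->
  0 < Nat.iter n gauss x < 1 /\ irrational (Nat.iter n gauss x).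
Proof.
  intros Hx Hirr; induction n as [|n [Hn Hirr_n]]; [now split|].
  rewrite iter_gauss_S; split; [now apply gauss_in_unit | now apply gauss_irrational].
Qed.

Definition alpha : R := (sqrt 3 - 1) / 2.
Definition beta : R := sqrt 3 - 1.

Lemma beta_double : beta = 2 * alpha.
Proof. unfold alpha, beta; field. Qed.

Lemma alpha_beta_bounds : 1/3 < alpha < 2/5 /\ 2/3 < beta < 4/5.
Proof.
  assert (H3 := sqrt_sqrt 3 ltac:(lra)); assert (Hpos := sqrt_pos 3).
  unfold alpha, beta; repeat split; nra.
Qed.

Lemma inv_alpha : / alpha = beta + 2.
Proof.
  assert (H3 := sqrt_sqrt 3 ltac:(lra)); destruct alpha_beta_bounds as [Ha _].
  apply (Rmult_eq_reg_l alpha); [|lra]; rewrite Rinv_r by lra.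
  unfold alpha, beta; nra.
Qed.

Lemma inv_beta : / beta = alpha + 1.
Proof.
  assert (H3 := sqrt_sqrt 3 ltac:(lra)); destruct alpha_beta_bounds as [_ Hb].
  apply (Rmult_eq_reg_l beta); [|lra]; rewrite Rinv_r by lra.
  unfold alpha, beta; nra.
Qed.

Lemma floorR_inv_alpha : floorR (/ alpha) = 2%Z.
Proof.
  destruct alpha_beta_bounds; rewrite inv_alpha; apply floorR_unique; simpl; lra.
Qed.

Lemma floorR_inv_beta : floorR (/ beta) = 1%Z.
Proof.
  destruct alpha_beta_bounds; rewrite inv_beta; apply floorR_unique; simpl; lra.
Qed.

Lemma gauss_alpha : gauss alpha = beta.
Proof. unfold gauss; rewrite floorR_inv_alpha, inv_alpha; simpl; ring. Qed.

Lemma gauss_beta : gauss beta = alpha.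
Proof. unfold gauss; rewrite floorR_inv_beta, inv_beta; simpl; ring. Qed.

Lemma iter_gauss_alpha_beta (t : R) (n : nat) : t = alpha \/ t = beta ->
  Nat.iter n gauss t = alpha \/ Nat.iter n gauss t = beta.
Proof.
  intro Ht; induction n as [|n [E | E]]; [exact Ht | |];
    rewrite iter_gauss_S, E; [right; exact gauss_alpha | left; exact gauss_beta].
Qed.

Lemma B2_alpha_beta (t : R) : t = alpha \/ t = beta -> B2 t.
Proof.
  intro Ht; destruct alpha_beta_bounds; split; [|split].
  - destruct Ht; subst; lra.
  - destruct Ht as [-> | ->].
    + apply (irrational_of_affine 2 1); unfold alpha; simpl.
      replace (2 * ((sqrt 3 - 1) / 2) + 1) with (sqrt 3) by field.
      exact irrational_sqrt3.
    + apply (irrational_of_affine 1 1); unfold beta; simpl.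
      replace (1 * (sqrt 3 - 1) + 1) with (sqrt 3) by ring.
      exact irrational_sqrt3.
  - intros [|n] Hn; [lia|]; rewrite cf_digit_S.
    destruct (iter_gauss_alpha_beta t n Ht) as [-> | ->];
      [rewrite floorR_inv_alpha | rewrite floorR_inv_beta]; lia.
Qed.

Definition outside (d t : R) : Prop := t <= alpha - d \/ beta + d <= t.

Lemma gauss_outside (t d : R) : 0 < t < 1 -> (floorR (/ t) <= 2)%Z -> 0 <= d ->
  outside d t -> outside (d / beta) (gauss t).
Proof.
  intros Ht Hdigit Hd Hout; destruct alpha_beta_bounds as [Ha Hb].
  assert (Hu : / t * t = 1) by (apply Rinv_l; lra).
  assert (Hdb : d / beta = d * (alpha + 1)) by (rewrite <- inv_beta; reflexivity).
  unfold gauss; rewrite Hdb; destruct Hout as [Hlow | Hhigh].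
  - right.
    assert (Hk : IZR (floorR (/ t)) <= 2) by (apply IZR_le; exact Hdigit).
    assert (Hab : alpha * (beta + 2) = 1) by (rewrite <- inv_alpha; apply Rinv_r; lra).
    assert (E : (/ t - (beta + 2)) * t = (beta + 2) * (alpha - t)).
    { rewrite Rmult_minus_distr_r, Hu; nra. }
    assert (Hgap : d * (alpha + 1) * t <= (/ t - (beta + 2)) * t).
    { rewrite E.
      assert (0 <= d * (alpha + 1)) by (apply Rmult_le_pos; lra).
      assert (d * (alpha + 1) * t <= d * (alpha + 1)) by nra.
      assert ((beta + 2) * d <= (beta + 2) * (alpha - t)) by (apply Rmult_le_compat_l; lra).
      nra. }
    apply Rmult_le_reg_r in Hgap; lra.
  - left.
    assert (Hab : beta * (alpha + 1) = 1) by (rewrite <- inv_beta; apply Rinv_r; lra).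
    assert (Hinv : / t <= alpha + 1).
    { rewrite <- inv_beta; apply Rinv_le_contravar; lra. }
    assert (Hshift : beta <= (1 - d) * t).
    { assert (0 <= (1 - d) * (t - (beta + d))) by (apply Rmult_le_pos; lra).
      assert (0 <= d * (1 - beta - d)) by (apply Rmult_le_pos; lra).
      nra. }
    assert (Hgap : / t * t <= (alpha + 1) * (1 - d) * t).
    { rewrite Hu; nra. }
    apply Rmult_le_reg_r in Hgap; [|lra].
    rewrite (floorR_unique (/ t) 1) by (simpl; nra); simpl; lra.
Qed.

Lemma outside_lt_1 (d t : R) : 0 < t < 1 -> outside d t -> d < 1.
Proof. destruct alpha_beta_bounds; unfold outside; lra. Qed.

Lemma B2_iter_outside (x d : R) (n : nat) : B2 x -> 0 <= d -> outside d x ->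
  outside (d * (/ beta) ^ n) (Nat.iter n gauss x).
Proof.
  intros [Hx [Hirr Hdigits]] Hd Hout; destruct alpha_beta_bounds as [_ Hb].
  induction n as [|n IH]; [now rewrite pow_O, Rmult_1_r|].
  replace (d * (/ beta) ^ S n) with (d * (/ beta) ^ n / beta) by (simpl; unfold Rdiv; ring).
  rewrite iter_gauss_S; apply gauss_outside.
  - now apply iter_gauss_in_unit.
  - rewrite <- cf_digit_S; apply Hdigits; lia.
  - apply Rmult_le_pos; [exact Hd | apply pow_le; left; apply Rinv_0_lt_compat; lra].
  - exact IH.
Qed.

Lemma B2_not_outside (x d : R) : B2 x -> 0 < d -> ~ outside d x.
Proof.
  intros HB Hd Hout; destruct alpha_beta_bounds as [Ha Hb].
  assert (Hgrow : Rabs (/ beta) > 1).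
  { rewrite Rabs_pos_eq by (left; apply Rinv_0_lt_compat; lra).
    rewrite inv_beta; lra. }
  destruct (Pow_x_infinity (/ beta) Hgrow (/ d)) as [N HN].
  specialize (HN N (le_n N)); rewrite Rabs_pos_eq in HN
    by (apply pow_le; left; apply Rinv_0_lt_compat; lra).
  assert (Hout_N := B2_iter_outside x d N HB (Rlt_le _ _ Hd) Hout).
  destruct HB as [Hx [Hirr _]].
  assert (Hlt := outside_lt_1 _ _ (proj1 (iter_gauss_in_unit x N Hx Hirr)) Hout_N).
  assert (Hge : d * / d <= d * (/ beta) ^ N) by (apply Rmult_le_compat_l; lra).
  rewrite Rinv_r in Hge; lra.
Qed.

Lemma B2_between (x : R) : B2 x -> alpha <= x <= beta.
Proof.
  intro HB; split.
  - apply Rnot_lt_le; intro Hlt; apply (B2_not_outside x (alpha - x) HB); [lra | left; lra].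
  - apply Rnot_lt_le; intro Hlt; apply (B2_not_outside x (x - beta) HB); [lra | right; lra].
Qed.

Theorem mainTheorem4 : forall x y z : R,
  (B2 x /\ B2 y /\ B2 z /\ x + y = z) <->
  (x = (sqrt 3 - 1) / 2 /\ y = (sqrt 3 - 1) / 2 /\ z = sqrt 3 - 1).
Proof.
  intros x y z; fold alpha beta; split.
  - intros [Hx [Hy [Hz Hsum]]].
    apply B2_between in Hx, Hy, Hz; rewrite beta_double in *; lra.
  - intros [-> [-> ->]].
    split; [|split; [|split]]; try (apply B2_alpha_beta; tauto).
    rewrite beta_double; ring.
Qed.
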